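(* Let $(A,+,\circ)$ be a finite left brace with cyclic additive group, let $(A,\cdot)$ be its decomposable associated cycle set, let $g$ be an element of a transitive cycle base of $A$, and let $(A,\bullet)$ be the uniconnected associated cycle set $a\bullet b:=\lambda_a(g)^{-}\circ b$. Then $(A,\cdot)$ and $(A,\bullet)$ have finite multipermutation level and $mpl(A,\cdot)=mpl(A,\bullet)$. Moreover, for every $n\in\mathbb{N}$, the underlying sets of $\mathrm{Ret}^n(A,\cdot)$ and $\mathrm{Ret}^n(A,\bullet)$ coincide (as quotients of $A$).
   Context: A left brace is a set $A$ with two operations such that $(A,+)$ is an abelian group, $(A,\circ)$ is a group, and $a\circ(b+c)=a\circ b-a+a\circ c$. $\lambda_a(b):=-a+a\circ b$; $a\mapsto\lambda_a$ is a homomorphism $(A,\circ)\to\mathrm{Aut}(A,+)$. $a^{-}$ is the inverse in $(A,\circ)$. A transitive cycle base is a single $\lambda$-orbit generating $(A,+)$. A (non-degenerate) cycle set is a set $X$ with an operation such that each $\sigma_x:y\mapsto x\cdot y$ is bijective, $(x\cdot y)\cdot(x\cdot z)=(y\cdot x)\cdot(y\cdot z)$, and $x\mapsto x\cdot x$ is bijective. $\mathrm{Ret}(X)$ is the quotient cycle set of $X$ by $x\sim y\iff\sigma_x=\sigma_y$; $\mathrm{Ret}^0(X)=X$, $\mathrm{Ret}^i(X)=\mathrm{Ret}(\mathrm{Ret}^{i-1}(X))$; $mpl(X)$ is the least $n$ with $|\mathrm{Ret}^n(X)|=1$ (finite multipermutation level means such $n$ exists). The decomposable associated cycle set is $(A,\cdot)$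 with $a\cdot b:=\lambda_a^{-1}(b)$. The cycle set $(A,\bullet)$ is uniconnected, i.e. the group generated by its left multiplications acts regularly on $A$. *)

From mathcomp Require Import all_boot all_order all_algebra.
Set Implicit Arguments. Unset Strict Implicit. Unset Printing Implicit Defensive.
Import GRing.Theory.
Local Open Scope ring_scope.

Definition is_left_brace (T : zmodType) (circ : T -> T -> T) (inv : T -> T)
    (e : T) : Prop :=
  [/\ associative circ, left_id e circ, right_id e circ,
      (forall a, circ (inv a) a = e) & (forall a, circ a (inv a) = e)] /\
  (forall a b c, circ a (b + c) = circ a b - a + circ a c).

Definition cyclic_add (T : zmodType) : Prop :=
  exists x : T, forall a : T, exists n : int, a = x *~ n.

Definition brace_lambda (T : zmodType) (circ : T -> T -> T) (a b : T) : T :=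
  - a + circ a b.

Definition lambda_orbit (T : zmodType) (circ : T -> T -> T) (x : T) : T -> Prop :=
  fun y => exists a, y = brace_lambda circ a x.

Definition generates_add (T : finZmodType) (X : T -> Prop) : Prop :=
  forall a : T, exists (s : seq T) (c : T -> int),
    (forall x, x \in s -> X x) /\ a = \sum_(x <- s) x *~ c x.

Definition transitive_cycle_base (T : finZmodType) (circ : T -> T -> T)
    (X : T -> Prop) : Prop :=
  (exists x, forall y, X y <-> lambda_orbit circ x y) /\ generates_add X.

(* Kernel on T of the projection T -> Ret^n(T, op):
   ret_rel op 0 = equality;
   x ~_{n+1} y  iff  sigma_[x]_n = sigma_[y]_n on Ret^n, i.e.
   forall z, op x z ~_n op y z. *)
Fixpoint ret_rel (T : Type) (op : T -> T -> T) (n : nat) : T -> T -> Prop :=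
  match n with
  | 0 => fun x y => x = y
  | n'.+1 => fun x y => forall z, ret_rel op n' (op x z) (op y z)
  end.

Definition ret_trivial (T : Type) (op : T -> T -> T) (n : nat) : Prop :=
  forall x y : T, ret_rel op n x y.

Definition is_mpl (T : Type) (op : T -> T -> T) (n : nat) : Prop :=
  ret_trivial op n /\ forall m, ret_trivial op m -> (n <= m)%N.

From HB Require Import structures.
From mathcomp Require Import all_boot all_order all_algebra.
From mathcomp Require Import boolp.
Set Implicit Arguments. Unset Strict Implicit. Unset Printing Implicit Defensive.
Import GRing.Theory.
Local Open Scope ring_scope.

(* Both retraction series are the socle series of the brace: x ~ y holds at
   level n+1 iff lambda_x and lambda_y agree modulo level n.  For the
   decomposable cycle set this is immediate, since lambda_x and lambda_x^-1
   determine each other modulo a congruence.  For (A, bullet), level n+1 only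
   asks lambda_x(g) ~ lambda_y(g) modulo level n; but the lambda's commute (the
   automorphisms of a cyclic group do) and the lambda-orbit of g generates A,
   so this already gives lambda_x ~ lambda_y.  Since A is finite the series
   stops growing at some level ~; then x |-> lambda_x(g) is injective modulo ~,
   hence onto modulo ~, so g ~ 0 and therefore every element is ~ 0: the
   series has reached the total relation. *)

Section Pigeonhole.
Local Open Scope quotient_scope.

Lemma injF_onto_mod (U : finType) (R : U -> U -> Prop) (f : U -> U) :
    (forall x, R x x) -> (forall x y, R x y -> R y x) ->
    (forall x y z, R x y -> R y z -> R x z) ->
    (forall x y, R (f x) (f y) <-> R x y) ->
  forall a, exists r, R (f r) a.
Proof.
move=> Rrefl Rsym Rtrans fR a.
have er_refl : reflexive (fun x y => `[< R x y >]) by move=> x; apply/asboolP.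
have er_sym : symmetric (fun x y => `[< R x y >]).
  by move=> x y; apply/asboolP/asboolP; apply: Rsym.
have er_trans : transitive (fun x y => `[< R x y >]).
  by move=> y x z /asboolP xy /asboolP yz; apply/asboolP; apply: Rtrans yz.
pose eR := EquivRel (fun x y => `[< R x y >]) er_refl er_sym er_trans.
pose F (q : {eq_quot eR}) : {eq_quot eR} := \pi_{eq_quot eR} (f (repr q)).
have F_inj : injective F.
  move=> q1 q2 /(eqmodP eR)/asboolP/fR/asboolP/(eqmodP eR).
  by rewrite !reprK.
have /codomP [q Fq] := injF_onto (T := quot_type {eq_quot eR}) F_inj (\pi a).
by exists (repr q); apply/asboolP; apply/(eqmodP eR); rewrite Fq.
Qed.

End Pigeonhole.

Lemma subset_chain_stationary (U : finType) (P : nat -> {set U}) :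
  (forall n, P n \subset P n.+1) -> exists n, P n.+1 \subset P n.
Proof.
move=> incP.
have grow n : (exists m, P m.+1 \subset P m) \/ (n <= #|P n|)%N.
  elim: n => [|n [|le_n]]; [by right | by left | ].
  have [stat | nstat] := boolP (P n.+1 \subset P n); first by left; exists n.
  by right; apply: leq_ltn_trans le_n (proper_card _); rewrite properE incP.
by case: (grow #|U|.+1) => // /leq_trans/(_ (max_card _)); rewrite ltnn.
Qed.

Lemma cyclic_zmod_morphism_comm (V : zmodType) (f h : V -> V) :
  zmod_morphism f -> zmod_morphism h -> cyclic_add V -> forall z, f (h z) = h (f z).
Proof.
move=> fB hB [x genx] z; have [n ->] := genx z.
pose fA : {additive V -> V} := HB.pack f (GRing.isZmodMorphism.Build V V f fB).
pose hA : {additive V -> V} := HB.pack h (GRing.isZmodMorphism.Build V V h hB).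
have fMz u k : f (u *~ k) = f u *~ k by exact: (raddfMz fA).
have hMz u k : h (u *~ k) = h u *~ k by exact: (raddfMz hA).
have [k hk] := genx (h x); have [m fm] := genx (f x).
by rewrite !hMz !fMz !hMz hk fm fMz hMz fm hk (mulrzAC k m).
Qed.

Lemma generates_add_ind (V : finZmodType) (X Q : V -> Prop) :
    generates_add X -> Q 0 -> (forall a b, Q a -> Q b -> Q (a + b)) ->
    (forall a, Q a -> Q (- a)) -> (forall x, X x -> Q x) ->
  forall a, Q a.
Proof.
move=> genX Q0 QD QN QX a; have [s [c [sX ->]]] := genX a.
have QMz x n : Q x -> Q (x *~ n).
  move=> Qx; have QMn m : Q (x *+ m).
    by elim: m => [|m]; rewrite ?mulr0n // mulrS; apply: QD.
  by case: n => m; [exact: QMn | apply: QN; exact: QMn].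
by rewrite big_seq; apply: big_ind => // x /sX/QX/QMz.
Qed.

Lemma is_mpl_exists (A : Type) (op : A -> A -> A) n :
  ret_trivial op n -> exists m, is_mpl op m.
Proof.
move=> triv_n; have ex_triv : exists n, `[< ret_trivial op n >].
  by exists n; apply/asboolP.
have [m /asboolP triv_m min_m] := ex_minnP ex_triv.
by exists m; split=> // k /asboolP/min_m.
Qed.

Lemma eq_is_mpl (A : Type) (op1 op2 : A -> A -> A) n :
    (forall k x y, ret_rel op1 k x y <-> ret_rel op2 k x y) ->
  is_mpl op1 n -> is_mpl op2 n.
Proof.
move=> eq_ret [triv_n min_n].
have eq_triv k : ret_trivial op1 k <-> ret_trivial op2 k.
  by split=> triv x y; apply/eq_ret; apply: triv.
by split=> [|k /eq_triv/min_n //]; apply/eq_triv.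
Qed.

Section BraceLambda.
Variables (T : zmodType) (circ : T -> T -> T) (inv : T -> T) (e : T).
Hypothesis brace : is_left_brace circ inv e.
Local Notation lam := (brace_lambda circ).

Let circA : associative circ. Proof. by case: brace => [[]]. Qed.
Let circ1 : left_id e circ. Proof. by case: brace => [[]]. Qed.
Let circr1 : right_id e circ. Proof. by case: brace => [[]]. Qed.
Let circVl a : circ (inv a) a = e. Proof. by case: brace => [[]]. Qed.
Let circVr a : circ a (inv a) = e. Proof. by case: brace => [[]]. Qed.
Let circDr a b c : circ a (b + c) = circ a b - a + circ a c.
Proof. by case: brace. Qed.

Lemma circr0 a : circ a 0 = a.
Proof.
have : circ a 0 - a + circ a 0 = 0 + circ a 0 by rewrite -circDr addr0 add0r.
by move/addIr/eqP; rewrite subr_eq0 => /eqP.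
Qed.

Lemma brace_unit0 : e = 0.
Proof. by rewrite -(circr0 e) circ1. Qed.

Lemma lamD a : {morph lam a : u v / u + v}.
Proof. by move=> u v; rewrite /brace_lambda circDr !addrA. Qed.

Lemma lamB a : {morph lam a : u v / u - v}.
Proof. by move=> u v; apply: (addIr (lam a v)); rewrite -lamD !subrK. Qed.

Lemma lamr0 a : lam a 0 = 0.
Proof. by apply: (addIr (lam a 0)); rewrite -lamD !add0r. Qed.

Lemma lamrN a u : lam a (- u) = - lam a u.
Proof. by rewrite -sub0r lamB lamr0 sub0r. Qed.

Lemma lam0 z : lam 0 z = z.
Proof. by rewrite /brace_lambda oppr0 add0r -brace_unit0 circ1. Qed.

Lemma circ_lam a b : circ a b = a + lam a b.
Proof. by rewrite /brace_lambda addNKr. Qed.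

Lemma lamM a b z : lam (circ a b) z = lam a (lam b z).
Proof.
apply: (addrI (circ a b)).
by rewrite -circ_lam -circA [circ b z]circ_lam [LHS]circ_lam lamD addrA -circ_lam.
Qed.

Lemma lamVK a : cancel (lam a) (lam (inv a)).
Proof. by move=> z; rewrite -lamM circVl brace_unit0 lam0. Qed.

Lemma lamKV a : cancel (lam (inv a)) (lam a).
Proof. by move=> z; rewrite -lamM circVr brace_unit0 lam0. Qed.

Lemma lamV a : lam (inv a) a = - inv a.
Proof. by apply: (addrI (inv a)); rewrite -circ_lam circVl brace_unit0 subrr. Qed.

Lemma invK : involutive inv.
Proof. by move=> a; rewrite -[LHS]circr1 -(circVl a) circA circVl circ1. Qed.

Lemma circV_lam a b : circ (inv a) b = lam (inv a) (b - a).
Proof. by rewrite lamB lamV opprK addrC -circ_lam. Qed.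

Lemma add_circ a b : a + b = circ a (lam (inv a) b).
Proof. by rewrite circ_lam lamKV. Qed.

Record brace_congruence (R : T -> T -> Prop) : Prop := BraceCongruence {
  cong_refl : forall x, R x x;
  cong_sym : forall x y, R x y -> R y x;
  cong_trans : forall x y z, R x y -> R y z -> R x z;
  cong_add : forall a b c d, R a b -> R c d -> R (a + c) (b + d);
  cong_lam : forall a b c d, R a b -> R c d -> R (lam a c) (lam b d) }.

Definition lam_eq_mod (R : T -> T -> Prop) x y := forall z, R (lam x z) (lam y z).

Section Congruence.
Variable R : T -> T -> Prop.
Hypothesis congR : brace_congruence R.

Let Rrefl := cong_refl congR.
Let Rsym := cong_sym congR.
Let Rtrans := cong_trans congR.
Let Radd := cong_add congR.
Let Rlam := cong_lam congR.

Lemma cong_subr0 x y : R x y <-> R (x - y) 0.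
Proof.
split=> xy; first by rewrite -(subrr y); apply: Radd.
by have := Radd xy (Rrefl y); rewrite subrK add0r.
Qed.

Lemma cong_lamr c u v : R (lam c u) (lam c v) <-> R u v.
Proof.
split=> [|uv]; last exact: Rlam.
by move/(Rlam (Rrefl (inv c))); rewrite !lamVK.
Qed.

Lemma cong_circ a b c d : R a b -> R c d -> R (circ a c) (circ b d).
Proof. by move=> ab cd; rewrite !circ_lam; apply: Radd (Rlam ab cd). Qed.

Lemma cong_inv a b : R a b -> R (inv a) (inv b).
Proof.
move=> ab; apply: Rsym.
have := cong_circ (Rrefl (inv a)) (cong_circ ab (Rrefl (inv b))).
by rewrite !circA circVl circ1 -circA circVr circr1.
Qed.

Lemma cong_opp a b : R a b -> R (- a) (- b).
Proof.
move=> ab; have := Radd (Radd (Rrefl (- a)) (Rsym ab)) (Rrefl (- b)).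
by rewrite addNr add0r addrK.
Qed.

Lemma lam_eq_mod_of_cong x y : R x y -> lam_eq_mod R x y.
Proof. by move=> xy z; apply: Rlam. Qed.

Let lam_trivial d := forall z, R (lam d z) z.

Let lam_trivial_conj c s : lam_trivial s -> lam_trivial (lam c s).
Proof.
(* The conjugate t = (c o s) o c^- acts trivially, and c o s = t o c then
   forces lam c s ~ t. *)
move=> triv_s.
pose t := circ (circ c s) (inv c).
have triv_t : lam_trivial t.
  by move=> z; rewrite !lamM -{2}[z](lamKV c) cong_lamr.
have ts : R (lam c s) t.
  have : R (c + lam c s) (c + t).
    rewrite -circ_lam (addrC c) -[circ c s](circr1) -(circVl c) circA.
    by rewrite circ_lam; apply: Radd (triv_t c).
  by move/(Radd (Rrefl (- c))); rewrite !addKr.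
by move=> z; apply: Rtrans (triv_t z); apply: Rlam.
Qed.

Let lam_trivial_conjE c s : lam_trivial (lam c s) <-> lam_trivial s.
Proof.
split; last exact: lam_trivial_conj.
by move/(lam_trivial_conj (inv c)); rewrite lamVK.
Qed.

Let lam_trivialD a b : lam_trivial a -> lam_trivial b -> lam_trivial (a + b).
Proof.
move=> triv_a /(lam_trivial_conj (inv a)) triv_b z.
by rewrite add_circ lamM; apply: Rtrans (triv_a z); rewrite cong_lamr.
Qed.

Let lam_eq_modE x y : lam_eq_mod R x y <-> lam_trivial (x - y).
Proof.
rewrite -(lam_trivial_conjE (inv y)) -circV_lam.
split=> xy z; first by rewrite lamM -{2}[z](lamVK y) cong_lamr.
by rewrite -(cong_lamr (inv y)) lamVK -lamM.
Qed.

Lemma brace_congruence_lam_eq_mod : brace_congruence (lam_eq_mod R).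
Proof.
split.
- by move=> x z; apply: Rrefl.
- by move=> x y xy z; apply: Rsym.
- by move=> x y w xy yw z; apply: Rtrans (yw z).
- move=> a b c d /lam_eq_modE ab /lam_eq_modE cd; apply/lam_eq_modE.
  by rewrite opprD addrACA; apply: lam_trivialD.
- move=> a b c d ab /lam_eq_modE cd z; apply: (Rtrans (y := lam (lam a d) z)).
    by move: z; apply/lam_eq_modE; rewrite -lamB lam_trivial_conjE.
  exact: Rlam (ab d) (Rrefl z).
Qed.

End Congruence.

(* [soc_rel n x y] iff x - y lies in the n-th socle of the brace. *)
Definition soc_rel n := iter n lam_eq_mod (@eq T).

Lemma brace_congruence_soc_rel n : brace_congruence (soc_rel n).
Proof.
elim: n => [|n IH]; last exact: brace_congruence_lam_eq_mod.
by split=> /= *; subst.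
Qed.

Lemma ret_rel_soc_rel (op : T -> T -> T) :
    (forall R, brace_congruence R ->
       forall x y, (forall z, R (op x z) (op y z)) <-> lam_eq_mod R x y) ->
  forall n x y, ret_rel op n x y <-> soc_rel n x y.
Proof.
move=> op_step; elim=> [//|n IH] x y /=.
rewrite -(op_step _ (brace_congruence_soc_rel n)).
by split=> xy z; apply/IH.
Qed.

Lemma ret_rel_decomposable (op : T -> T -> T) :
    (forall a, cancel (op a) (lam a)) ->
  forall n x y, ret_rel op n x y <-> soc_rel n x y.
Proof.
move=> opK; apply: ret_rel_soc_rel => R congR x y.
have opE a b : op a b = lam (inv a) b by rewrite -{2}(opK a b) lamVK.
have cong_lem := brace_congruence_lam_eq_mod congR.
split=> [xy | xy z]; last by rewrite !opE; apply: (cong_inv cong_lem xy).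
have xyV : lam_eq_mod R (inv x) (inv y) by move=> z; rewrite -!opE.
by have := cong_inv cong_lem xyV; rewrite !invK.
Qed.

End BraceLambda.

Section CycleBase.
Variables (T : finZmodType) (circ : T -> T -> T) (inv : T -> T) (e : T).
Hypothesis brace : is_left_brace circ inv e.
Local Notation lam := (brace_lambda circ).

Variables (X : T -> Prop) (g : T).
Hypotheses (cycT : cyclic_add T) (baseX : transitive_cycle_base circ X).
Hypothesis Xg : X g.

Lemma lam_orbit_ind (Q : T -> Prop) :
    Q 0 -> (forall a b, Q a -> Q b -> Q (a + b)) -> (forall a, Q a -> Q (- a)) ->
    (forall c, Q (lam c g)) ->
  forall a, Q a.
Proof.
move=> Q0 QD QN Qorb; apply: generates_add_ind (proj2 baseX) Q0 QD QN _.
have [[x0 orbX] _] := baseX; have /orbX [b gE] := Xg.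
move=> y /orbX [a ->].
by rewrite -[x0](lamVK brace b) -gE -(lamM brace).
Qed.

Lemma lam_eq_mod_of_orbit R x y :
  brace_congruence circ R -> R (lam x g) (lam y g) -> lam_eq_mod circ R x y.
Proof.
move=> congR xy; apply: (lam_orbit_ind (Q := fun z => R (lam x z) (lam y z))).
- by rewrite !(lamr0 brace); exact: (cong_refl congR 0).
- by move=> a b ha hb; rewrite !(lamD brace); exact: (cong_add congR ha hb).
- by move=> a ha; rewrite !(lamrN brace); exact: (cong_opp congR ha).
- move=> c; rewrite !(cyclic_zmod_morphism_comm (lamB brace _) (lamB brace c) cycT).
  exact: (cong_lam congR (cong_refl congR c) xy).
Qed.

Lemma ret_rel_bullet n x y :
  ret_rel (fun a b => circ (inv (lam a g)) b) n x y <-> soc_rel circ n x y.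
Proof.
apply: (ret_rel_soc_rel brace) => R congR {}x {}y.
split=> [xy | xy z]; last first.
  exact: (cong_circ congR (cong_inv brace congR (xy g)) (cong_refl congR z)).
apply: (lam_eq_mod_of_orbit congR).
by have := cong_inv brace congR (xy 0); rewrite !(circr0 brace) ?(invK brace).
Qed.

Lemma brace_congruence_total R :
    brace_congruence circ R -> (forall x y, lam_eq_mod circ R x y -> R x y) ->
  forall x y, R x y.
Proof.
move=> congR lem_R.
have [r rg0] : exists r, R (lam r g) 0.
  apply: injF_onto_mod (cong_refl congR) (cong_sym congR) (cong_trans congR) _ 0.
  move=> x y; split=> [/(lam_eq_mod_of_orbit congR)/lem_R // | xy].
  exact: (cong_lam congR xy (cong_refl congR g)).
have g0 : R g 0.
  have := cong_lam congR (cong_refl congR (inv r)) rg0.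
  by rewrite (lamVK brace) (lamr0 brace).
have all0 : forall w, R w 0.
  apply: (lam_orbit_ind (Q := fun w => R w 0)); first exact: (cong_refl congR).
  - by move=> a b a0 b0; rewrite -[0]addr0; exact: (cong_add congR a0 b0).
  - by move=> a a0; rewrite -oppr0; exact: (cong_opp congR a0).
  - move=> c; rewrite -(lamr0 brace c).
    exact: (cong_lam congR (cong_refl congR c) g0).
by move=> x y; apply/(cong_subr0 congR).
Qed.

Lemma soc_rel_total : exists n, forall x y, soc_rel circ n x y.
Proof.
pose P n := [set d | `[< soc_rel circ n d 0 >]].
have [n stat] : exists n, P n.+1 \subset P n.
  apply: subset_chain_stationary => n; apply/subsetP => d; rewrite !inE.
  by move/asboolP/(lam_eq_mod_of_cong (brace_congruence_soc_rel brace n))/asboolP.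
exists n; apply: brace_congruence_total (brace_congruence_soc_rel brace n) _ => x y xy.
apply/(cong_subr0 (brace_congruence_soc_rel brace n)).
have /(cong_subr0 (brace_congruence_soc_rel brace n.+1)) xy0 := xy.
by have /subsetP/(_ (x - y)) := stat; rewrite !inE => /(_ (asboolT xy0))/asboolP.
Qed.

End CycleBase.

Theorem mainTheorem5 (T : finZmodType) (circ : T -> T -> T) (inv : T -> T)
    (e : T) (cdot : T -> T -> T) (X : T -> Prop) (g : T) :
  is_left_brace circ inv e ->
  cyclic_add T ->
  (* (T, cdot) is the decomposable associated cycle set: a . b = lambda_a^{-1}(b) *)
  (forall a b, brace_lambda circ a (cdot a b) = b) ->
  transitive_cycle_base circ X -> X g ->
  let bullet := fun a b => circ (inv (brace_lambda circ a g)) b in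
  (exists n, is_mpl cdot n /\ is_mpl bullet n) /\
  (forall (n : nat) (x y : T), ret_rel cdot n x y <-> ret_rel bullet n x y).
Proof.
move=> brace cycT cdotK baseX Xg bullet.
have ret_cdot := ret_rel_decomposable brace cdotK.
have ret_bullet := ret_rel_bullet brace cycT baseX Xg.
have ret_cdot_bullet n x y : ret_rel cdot n x y <-> ret_rel bullet n x y.
  exact: iff_trans (ret_cdot n x y) (iff_sym (ret_bullet n x y)).
split; last exact: ret_cdot_bullet.
have [n0 soc_n0] := soc_rel_total brace cycT baseX Xg.
have [n mpl_n] : exists n, is_mpl cdot n.
  by apply: (is_mpl_exists (n := n0)) => x y; apply/ret_cdot.
by exists n; split; last exact: eq_is_mpl ret_cdot_bullet mpl_n.
Qed.
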